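(* Let $N\ge2$, let $\Upsilon$ be a tree-like covering of $\mathcal U$ with base vertex $B$, and let $s\in BC_N\subset\mathrm{Aut}(F_N)$. Then the pointed covering $s(\Upsilon)$ (the one corresponding to the subgroup $s(\mathfrak g(\Upsilon))$) is tree-like as well, and $\Gamma(s(\Upsilon))=s(\Gamma(\Upsilon))$ as edge-labelled trees with a marked vertex.
   Context: $\mathcal U=\bigvee_{k=0}^{N-1}(S^1)_k$ is a wedge of $N$ oriented circles with wedge point $O$, and $F_N=\pi_1(\mathcal U,O)$ is free on generators $e_0,\dots,e_{N-1}$, $e_k$ corresponding to the $k$-th circle. A (connected, unramified) covering $r:\Upsilon\to\mathcal U$ is viewed as a graph whose edges are oriented and labelled by $k$ (or $e_k$) when mapped to the $k$-th circle; a base vertex $B$ is chosen, and $\mathfrak g(\Upsilon)=r_*(\pi_1(\Upsilon,B))\subset F_N$; pointed coverings up to equivalence correspond bijectively to subgroups of $F_N$, and $\mathrm{Aut}(F_N)$ acts on pointed coverings through its action $H\mapsto s(H)$ on subgroups. A circuit is a closed sequence of edges passing every vertex at most once. $\Upsilon$ is tree-like if (1) all circuits have length 1 or 2; (2) both edges of every circuit of length 2 have the same label; (3) for each $k\in\{0,\dots,N-1\}$ there is exactly one circuit of length 2 whose edges are labelled $k$. For tree-like $\Upsilon$, $\Gamma(\Upsilon)$ is the graph on the vertices of $\Upsilon$ in which $A,B$ are joined by an edge labelled $k$ iff $\Upsilon$ contains edges $A\to B$ and $B\to A$ both labelled $k$ (loops ignored); it is a tree with $N$ edges labelled bijectively by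 $0,\dots,N-1$, with the base vertex marked. $BC_N$ is the subgroup of $\mathrm{Aut}(F_N)$ generated by $\lambda(e_k)=e_{k+1}$ (indices mod $N$) and $u_1,\dots,u_{N-1}$ with $u_k(e_{k-1})=e_k$, $u_k(e_k)=e_k^{-1}e_{k-1}e_k$, $u_k(e_l)=e_l$ for $l\neq k-1,k$. $BC_N$ acts on edge-labelled trees with a marked vertex without changing the vertex set or the marked vertex: $u_k$ exchanges the labels $k-1,k$ if the edges with these labels are disjoint, and if the edge labelled $k-1$ is $AB$ and the edge labelled $k$ is $AC$ then $AB$ receives label $k$, $AC$ is erased and a new edge $BC$ labelled $k-1$ is drawn; $\lambda$ shifts labels $i\mapsto i+1\pmod N$. *)

From HB Require Import structures.
From mathcomp Require Import all_boot all_fingroup.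
From Stdlib Require Import Relations.
Set Implicit Arguments. Unset Strict Implicit. Unset Printing Implicit Defensive.

(* The free group F_N, as words modulo free reduction.                 *)
(* A letter (i, false) is e_i, a letter (i, true) is e_i^{-1}.         *)
Definition letter (N : nat) := ('I_N * bool)%type.
Definition fword (N : nat) := seq (letter N).
Definition inv_letter N (x : letter N) : letter N := (x.1, ~~ x.2).
Definition inv_word N (w : fword N) : fword N := rev (map (@inv_letter N) w).

Inductive red_step N : fword N -> fword N -> Prop :=
  | RedStep (u v : fword N) (x : letter N) :
      red_step (u ++ [:: x; inv_letter x] ++ v) (u ++ v).

Definition free_eq N : relation (fword N) := clos_refl_sym_trans _ (@red_step N).

Definition subst N (phi : 'I_N -> fword N) (w : fword N) : fword N :=
  flatten (map (fun x : letter N => if x.2 then inv_word (phi x.1) else phi x.1) w).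

(* BLam = lambda, BU k = u_k (requires 0 < k, i.e. 1 <= k <= N-1).     *)
Inductive bcgen (N : nat) := BLam | BLamInv | BU of 'I_N | BUInv of 'I_N.
Arguments BLam {N}. Arguments BLamInv {N}.

Definition gen_ok N (g : bcgen N) : bool :=
  match g with BU k | BUInv k => 0 < k | _ => true end.
(* a word g_1 ... g_m in the generators and their inverses, standing for
   the element g_1 o g_2 o ... o g_m of BC_N; every element of BC_N is
   represented by such a word *)
Definition bc_word_ok N (s : seq (bcgen N)) : bool := all (@gen_ok N) s.

Definition gl N (i : 'I_N) : fword N := [:: (i, false)].
Definition glinv N (i : 'I_N) : fword N := [:: (i, true)].

(* images of the generators (ord_pred k = k-1, ordS k = k+1 mod N) *)
Definition gen_img N (g : bcgen N) : 'I_N -> fword N :=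
  match g with
  | BLam => fun i => gl (ordS i)
  | BLamInv => fun i => gl (ord_pred i)
  | BU k => fun i =>
      if i == ord_pred k then gl k
      else if i == k then glinv k ++ gl (ord_pred k) ++ gl k
      else gl i
  | BUInv k => fun i =>
      if i == k then gl (ord_pred k)
      else if i == ord_pred k then gl (ord_pred k) ++ gl k ++ glinv (ord_pred k)
      else gl i
  end.

Fixpoint bc_apply N (s : seq (bcgen N)) (w : fword N) : fword N :=
  match s with
  | [::] => w
  | g :: s' => subst (gen_img g) (bc_apply s' w)
  end.

(* Coverings of the wedge U of N circles: a (finite) vertex set V and,  *)
(* for each label k, the permutation sigma k sending a vertex v to the *)
(* endpoint of the unique edge labelled k starting at v.               *)
Section Coverings.
Variables (N : nat) (V : finType) (sigma : 'I_N -> {perm V}).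

Definition step_letter (v : V) (x : letter N) : V :=
  if x.2 then ((sigma x.1)^-1)%g v else sigma x.1 v.

(* endpoint of the lift starting at v of the path spelled by w *)
Definition read (v : V) (w : fword N) : V := foldl step_letter v w.

Definition connected_cov (B : V) : Prop := forall v, exists w, read B w = v.

(* w represents an element of g(Upsilon) = r_*(pi_1(Upsilon, B)) *)
Definition in_g (B : V) (w : fword N) : Prop := read B w = B.

Definition circuit (m : nat) (vs : 'I_m -> V) (ks : 'I_m -> 'I_N) : Prop :=
  0 < m /\ injective vs /\ forall i, sigma (ks i) (vs i) = vs (ordS i).

Definition tree_like : Prop :=
  (forall m vs ks, @circuit m vs ks -> m <= 2) /\
  (forall vs ks, @circuit 2 vs ks -> ks ord0 = ks ord_max) /\
  (forall k : 'I_N, exists vs ks, @circuit 2 vs ks /\ (forall i, ks i = k) /\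
     forall vs' ks', @circuit 2 vs' ks' -> (forall i, ks' i = k) ->
       (vs' ord0 = vs ord0 /\ vs' ord_max = vs ord_max) \/
       (vs' ord0 = vs ord_max /\ vs' ord_max = vs ord0)).

Definition gamma_edge (k : 'I_N) (A B : V) : bool :=
  [&& A != B, sigma k A == B & sigma k B == A].

(* Gamma(Upsilon) as an edge-labelled graph: label k |-> set of endpoints
   of the edges labelled k (for tree-like Upsilon, exactly one edge per
   label, so this is the 2-element set of its endpoints) *)
Definition gamma : 'I_N -> {set V} :=
  fun k => [set A | [exists B, gamma_edge k A B]].
End Coverings.

(* Action of BC_N on edge-labelled trees E : 'I_N -> {set V}            *)
(* (E k = endpoints of the edge labelled k); marked vertex unchanged.  *)
Definition symdiff (V : finType) (X Y : {set V}) : {set V} := (X :|: Y) :\: (X :&: Y).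

Definition gen_tree_act N (V : finType) (g : bcgen N) (E : 'I_N -> {set V}) : 'I_N -> {set V} :=
  match g with
  | BLam => fun j => E (ord_pred j)
  | BLamInv => fun j => E (ordS j)
  | BU k => fun j =>
      let X := E (ord_pred k) in let Y := E k in
      if [disjoint X & Y] then
        (if j == ord_pred k then Y else if j == k then X else E j)
      else (* X = AB, Y = AC : AB gets label k, new edge BC labelled k-1 *)
        (if j == ord_pred k then symdiff X Y else if j == k then X else E j)
  | BUInv k => fun j =>
      let X := E (ord_pred k) in let Y := E k in
      if [disjoint X & Y] then
        (if j == ord_pred k then Y else if j == k then X else E j)
      else
        (if j == ord_pred k then Y else if j == k then symdiff X Y else E j)
  end.

Definition tree_act N (V : finType) (s : seq (bcgen N)) (E : 'I_N -> {set V}) :=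
  foldr (@gen_tree_act N V) E s.

From HB Require Import structures.
From mathcomp Require Import all_boot all_fingroup.
From Stdlib Require Import Relation_Operators.
Set Implicit Arguments. Unset Strict Implicit. Unset Printing Implicit Defensive.

(* A tree-like covering is determined by its tree Gamma: the generator e_k acts on the
   vertices as the transposition of the two endpoints of the edge labelled k.  Conversely every
   labelled tree E defines such a covering [tree_cov E], which is tree-like with Gamma = E.
   For a generator g of BC_N, the covering of g(E) is the pull-back of that of E along g^-1:
   its permutation for the label i is the one E assigns to the word g^-1(e_i).  For lambda this
   is a relabelling; for u_k it is the identity t_(t_X(Y)) = t_X t_Y t_X between the
   transpositions of the edges X, Y labelled k-1, k, and t_X(Y) is precisely the new edge
   labelled k-1.  Hence the subgroup of the covering of g(E) is g applied to the subgroup of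
   that of E, and g(E) is again a tree, since the move replaces two sides of a triangle by two
   other sides.  Induction along the word s and the uniqueness of the connected pointed
   covering with a given subgroup finish the proof. *)

(** * Free groups *)

Section FreeGroup.
Variable N : nat.
Implicit Types (u v w a b : fword N) (x : letter N) (phi psi : 'I_N -> fword N).

Lemma inv_letterK : involutive (@inv_letter N).
Proof. by case=> i c; rewrite /inv_letter negbK. Qed.

Lemma inv_word_cat u w : inv_word (u ++ w) = inv_word w ++ inv_word u.
Proof. by rewrite /inv_word map_cat rev_cat. Qed.

Lemma inv_wordK : involutive (@inv_word N).
Proof.
by move=> w; rewrite /inv_word map_rev revK -map_comp (eq_map inv_letterK) map_id.
Qed.

Lemma free_eq_refl w : free_eq w w. Proof. exact: rst_refl. Qed.
Lemma free_eq_sym u w : free_eq u w -> free_eq w u. Proof. exact: rst_sym. Qed.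
Lemma free_eq_trans v u w : free_eq u v -> free_eq v w -> free_eq u w.
Proof. exact: rst_trans. Qed.

Lemma free_eq_cancel u w x : free_eq (u ++ [:: x, inv_letter x & w]) (u ++ w).
Proof. exact/rst_step/(@RedStep N u w x). Qed.

Lemma free_eq_morph (f : fword N -> fword N) :
  (forall u w, red_step u w -> free_eq (f u) (f w)) ->
  forall u w, free_eq u w -> free_eq (f u) (f w).
Proof.
move=> hf u w; elim=> {u w} [u w /hf //|w|u w _|u v w _ huv _ hvw].
- exact: free_eq_refl.
- exact: free_eq_sym.
- exact: free_eq_trans hvw.
Qed.

Lemma free_eq_ctx u w a b : free_eq a b -> free_eq (u ++ a ++ w) (u ++ b ++ w).
Proof.
apply: (@free_eq_morph (fun a => u ++ a ++ w)) => _ _ [p q x].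
by have := free_eq_cancel (u ++ p) (q ++ w) x; rewrite -!catA.
Qed.

Lemma free_eq_cat a a' b b' :
  free_eq a a' -> free_eq b b' -> free_eq (a ++ b) (a' ++ b').
Proof.
move=> /(free_eq_ctx [::] b) haa' /(free_eq_ctx a' [::]); rewrite !cats0.
exact: free_eq_trans.
Qed.

Lemma free_eq_mulV w : free_eq (w ++ inv_word w) [::].
Proof.
elim: w => [|x w IHw] /=; first exact: free_eq_refl.
rewrite /inv_word rev_cons -cats1 -/(inv_word w) catA -cat_cons.
apply: free_eq_trans (free_eq_ctx [:: x] [:: inv_letter x] IHw) _.
exact: (free_eq_cancel [::] [::]).
Qed.

Lemma free_eq_inv a b : free_eq a b -> free_eq (inv_word a) (inv_word b).
Proof.
apply: free_eq_morph => _ _ [p q x]; rewrite !inv_word_cat.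
have -> : inv_word [:: x; inv_letter x] = [:: x; inv_letter x].
  by rewrite /inv_word /= inv_letterK.
by rewrite -catA; apply: free_eq_cancel.
Qed.

Definition letter_img phi x := if x.2 then inv_word (phi x.1) else phi x.1.

Lemma subst_cons phi x w : subst phi (x :: w) = letter_img phi x ++ subst phi w.
Proof. by []. Qed.

Lemma subst_cat phi u w : subst phi (u ++ w) = subst phi u ++ subst phi w.
Proof. by rewrite /subst map_cat flatten_cat. Qed.

Lemma letter_img_inv phi x : letter_img phi (inv_letter x) = inv_word (letter_img phi x).
Proof. by case: x => i [] //=; rewrite /letter_img inv_wordK. Qed.

Lemma subst_inv phi w : subst phi (inv_word w) = inv_word (subst phi w).
Proof.
elim: w => [|x w IHw] //; rewrite -cat1s !inv_word_cat !subst_cat IHw.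
by congr (_ ++ _); rewrite /subst /= !cats0 -letter_img_inv.
Qed.

Lemma free_eq_subst phi a b : free_eq a b -> free_eq (subst phi a) (subst phi b).
Proof.
apply: free_eq_morph => _ _ [p q x].
have := free_eq_ctx (subst phi p) (subst phi q) (free_eq_mulV (letter_img phi x)).
by rewrite !subst_cat !subst_cons letter_img_inv /= cats0 -catA.
Qed.

Lemma eq_subst phi psi w : (forall i, free_eq (phi i) (psi i)) ->
  free_eq (subst phi w) (subst psi w).
Proof.
move=> hphi; elim: w => [|[i c] w IHw]; first exact: free_eq_refl.
rewrite !subst_cons; apply: free_eq_cat => //.
by case: c; rewrite /letter_img /=; [apply: free_eq_inv|]; apply: hphi.
Qed.

Lemma subst_comp phi psi w :
  subst phi (subst psi w) = subst (fun i => subst phi (psi i)) w.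
Proof.
elim: w => [|[i []] w IHw] //; rewrite !subst_cons subst_cat IHw //.
by rewrite /letter_img /= subst_inv.
Qed.

Lemma subst_gl w : subst (@gl N) w = w.
Proof. by elim: w => [|[i []] w IHw] //; rewrite subst_cons IHw. Qed.
End FreeGroup.

(** * Coverings and their subgroups *)

Section Reading.
Variables (N : nat) (V : finType) (sigma : 'I_N -> {perm V}).
Implicit Types (u w a b : fword N) (x : letter N) (v : V).

Lemma read_cat v u w : read sigma v (u ++ w) = read sigma (read sigma v u) w.
Proof. exact: foldl_cat. Qed.

Lemma step_letterK v x : step_letter sigma (step_letter sigma v x) (inv_letter x) = v.
Proof. by case: x => i []; rewrite /step_letter /= ?permK ?permKV. Qed.

Lemma read_invK v w : read sigma (read sigma v w) (inv_word w) = v.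
Proof.
elim: w v => [|x w IHw] v //.
by rewrite -cat1s inv_word_cat read_cat IHw /read /= step_letterK.
Qed.

Lemma read_invKV v w : read sigma (read sigma v (inv_word w)) w = v.
Proof. by rewrite -{2}[w]inv_wordK read_invK. Qed.

Lemma read_free_eq v a b : free_eq a b -> read sigma v a = read sigma v b.
Proof.
move=> hab; elim: hab v => {a b} [_ _ [p q x]|a|a b _ IH|a b c _ IHab _ IHbc] v //.
- by rewrite !read_cat /read /= step_letterK.
- by rewrite IHab IHbc.
Qed.

Lemma read_conjg p q v :
  read sigma v (glinv p ++ gl q ++ gl p) = (sigma q ^ sigma p)%g v.
Proof. by rewrite conjgE !permM. Qed.

Lemma read_conjgV p q v :
  read sigma v (gl p ++ gl q ++ glinv p) = (sigma q ^ (sigma p)^-1)%g v.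
Proof. by rewrite conjgE invgK !permM. Qed.

End Reading.

Lemma eq_read N (V : finType) (s1 s2 : 'I_N -> {perm V}) :
  (forall k, s1 k = s2 k) -> forall v w, read s1 v w = read s2 v w.
Proof.
move=> s12 v w; elim: w v => [|x w IHw] v //=.
by rewrite /read /= -/(read _ _ _) IHw /step_letter s12.
Qed.

Lemma read_subst N (V : finType) (sigma tau : 'I_N -> {perm V}) phi :
  (forall i v, read tau v (phi i) = sigma i v) ->
  forall w v, read tau v (subst phi w) = read sigma v w.
Proof.
move=> hphi; elim=> [|[i c] w IHw] v //; rewrite subst_cons read_cat IHw.
case: c; rewrite /letter_img /step_letter /= ?hphi //.
by rewrite -{1}[v](permKV (sigma i)) -hphi read_invK.
Qed.

Lemma in_g_pullback N (V : finType) (sigma sigma' : 'I_N -> {perm V}) (B : V)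
    (phi psi : 'I_N -> fword N) :
  (forall i, free_eq (subst phi (psi i)) (gl i)) ->
  (forall i, free_eq (subst psi (phi i)) (gl i)) ->
  (forall i v, sigma' i v = read sigma v (psi i)) ->
  forall w, in_g sigma' B w <-> exists h, in_g sigma B h /\ free_eq (subst phi h) w.
Proof.
move=> phi_psi psi_phi hsigma'.
have read' v w : read sigma' v w = read sigma v (subst psi w).
  by rewrite (read_subst (sigma := sigma')) // => i u; rewrite hsigma'.
move=> w; split=> [hw|[h [hh hhw]]].
  exists (subst psi w); split; first by rewrite /in_g -read'.
  by rewrite subst_comp -[w in free_eq _ w]subst_gl; apply: eq_subst.
rewrite /in_g -(read_free_eq _ _ hhw) read' subst_comp.
by rewrite (read_free_eq _ _ (eq_subst h psi_phi)) subst_gl.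
Qed.

Lemma gamma_tperm N (V : finType) (sigma : 'I_N -> {perm V}) k (a b : V) :
  a != b -> sigma k = tperm a b -> gamma sigma k = [set a; b].
Proof.
move=> ab sk; apply/setP=> v; rewrite /gamma /gamma_edge inE sk.
apply/existsP/idP=> [[w /and3P[vw /eqP vw' _]] | /set2P[]->].
- by apply: contraR vw => /[!inE] /norP[va vb]; rewrite -vw' tpermD // eq_sym.
- by exists b; rewrite tpermL tpermR ab !eqxx.
- by exists a; rewrite tpermL tpermR eq_sym ab !eqxx.
Qed.

Lemma cov_map_exists N (V1 V2 : finType) (s1 : 'I_N -> {perm V1}) (s2 : 'I_N -> {perm V2})
    (B1 : V1) (B2 : V2) :
  connected_cov s1 B1 ->
  (forall w, in_g s1 B1 w -> in_g s2 B2 w) ->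
  exists f : V1 -> V2, forall w, f (read s1 B1 w) = read s2 B2 w.
Proof.
move=> conn1 sub12.
have read_transfer w1 w2 : read s1 B1 w1 = read s1 B1 w2 -> read s2 B2 w1 = read s2 B2 w2.
  move=> e12; have /sub12 : in_g s1 B1 (w1 ++ inv_word w2).
    by rewrite /in_g read_cat e12 read_invK.
  by rewrite /in_g read_cat => e; rewrite -{2}e read_invKV.
have ex v : exists w, read s1 B1 w == v by have [w <-] := conn1 v; exists w.
exists (fun v => read s2 B2 (xchoose (ex v))) => w.
exact/read_transfer/eqP/(xchooseP (ex _)).
Qed.

Lemma cov_iso N (V1 V2 : finType) (s1 : 'I_N -> {perm V1}) (s2 : 'I_N -> {perm V2})
    (B1 : V1) (B2 : V2) :
  connected_cov s1 B1 -> connected_cov s2 B2 ->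
  (forall w, in_g s1 B1 w <-> in_g s2 B2 w) ->
  exists f : V1 -> V2, [/\ bijective f, f B1 = B2 & forall k v, f (s1 k v) = s2 k (f v)].
Proof.
move=> conn1 conn2 g12.
have [f fE] := cov_map_exists conn1 (fun w => proj1 (g12 w)).
have [g gE] := cov_map_exists conn2 (fun w => proj2 (g12 w)).
exists f; split; [apply: (Bijective (g := g)) | exact: (fE [::]) |].
- by move=> v; have [w <-] := conn1 v; rewrite fE gE.
- by move=> v; have [w <-] := conn2 v; rewrite gE fE.
move=> k v; have [w <-] := conn1 v.
by have := fE (rcons w (k, false)); rewrite -cats1 !read_cat fE.
Qed.

Section Transport.
Variables (N : nat) (V1 V2 : finType) (s1 : 'I_N -> {perm V1}) (s2 : 'I_N -> {perm V2}).
Variables (f : V1 -> V2) (g : V2 -> V1).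
Hypotheses (fK : cancel f g) (gK : cancel g f) (f_comm : forall k v, f (s1 k v) = s2 k (f v)).

Let g_comm k u : g (s2 k u) = s1 k (g u).
Proof. by rewrite -{1}[u]gK -f_comm fK. Qed.

Lemma circuit_map m (vs : 'I_m -> V1) ks :
  circuit s1 vs ks -> circuit s2 (f \o vs) ks.
Proof.
case=> m_gt0 [vs_inj vsS]; split=> //; split; first exact/inj_comp/vs_inj/can_inj/fK.
by move=> i; rewrite /= -f_comm vsS.
Qed.

Lemma circuit_comap m (vs : 'I_m -> V2) ks :
  circuit s2 vs ks -> circuit s1 (g \o vs) ks.
Proof.
case=> m_gt0 [vs_inj vsS]; split=> //; split; first exact/inj_comp/vs_inj/can_inj/gK.
by move=> i; rewrite /= -g_comm vsS.
Qed.

Lemma tree_like_transport : tree_like s1 -> tree_like s2.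
Proof.
case=> short [same_label unique2]; split; [|split].
- by move=> m vs ks /circuit_comap /short.
- by move=> vs ks /circuit_comap /same_label.
move=> k; have [vs [ks [c [ksE uniq_c]]]] := unique2 k.
exists (f \o vs), ks; split; [exact: circuit_map | split=> // vs' ks' c' ks'E].
by case: (uniq_c _ _ (circuit_comap c') ks'E) => /= -[<- <-]; rewrite !gK; [left|right].
Qed.

Lemma gamma_transport k : gamma s2 k = f @: gamma s1 k.
Proof.
apply/setP=> u; rewrite -[u]gK mem_imset; last exact: can_inj fK.
rewrite !inE; apply/existsP/existsP=> -[w hw].
  by exists (g w); move: hw; rewrite /gamma_edge -{1 2 3}[w]gK -!f_comm !(can_eq fK).
by exists (f w); move: hw; rewrite /gamma_edge -!f_comm !(can_eq fK).
Qed.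

End Transport.

(** * Transpositions of two-element sets *)

Section SetTransposition.
Variable V : finType.
Implicit Types (X Y : {set V}) (x y v : V).

Definition set_tperm X : {perm V} :=
  if [pick xy : V * V | (xy.1 != xy.2) && (X == [set xy.1; xy.2])] is Some (x, y)
  then tperm x y else 1%g.

Lemma set_tpermE x y : x != y -> set_tperm [set x; y] = tperm x y.
Proof.
move=> xy; rewrite /set_tperm; case: pickP => [[a b] /andP[/= ab /eqP eab]|/(_ (x, y))].
  have: a \in [set x; y] /\ b \in [set x; y] by rewrite eab !inE !eqxx orbT.
  case=> /set2P[] ea /set2P[] eb; subst a b; by rewrite ?eqxx //= in ab; rewrite tpermC.
by rewrite /= xy eqxx.
Qed.

Lemma card2_tperm X : #|X| = 2 ->
  exists x y, [/\ x != y, X = [set x; y] & set_tperm X = tperm x y].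
Proof. by move/eqP/cards2P=> [x [y [xy ->]]]; exists x, y; rewrite set_tpermE. Qed.

Lemma set_tpermK X : involutive (set_tperm X).
Proof. by rewrite /set_tperm; case: pickP => [[x y] _|_ v]; [apply: tpermK | rewrite !perm1]. Qed.

Lemma set_tpermV X : (set_tperm X)^-1%g = set_tperm X.
Proof. by apply/permP=> v; rewrite -{1}[v](set_tpermK X) permK. Qed.

Lemma set_tperm_out X v : v \notin X -> set_tperm X v = v.
Proof.
rewrite /set_tperm; case: pickP => [[x y] /andP[_ /eqP->]|_]; last by rewrite perm1.
by rewrite !inE negb_or => /andP[vx vy]; rewrite tpermD 1?eq_sym.
Qed.

Lemma set_tperm_pair X x y : #|X| = 2 -> x \in X -> y \in X -> x != y -> set_tperm X x = y.
Proof.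
move=> /card2_tperm[a [b [ab -> ->]]]; rewrite !inE.
by case/orP=> /eqP-> /orP[]/eqP->; rewrite ?eqxx ?tpermL ?tpermR.
Qed.

Lemma set_tperm_moved X v : set_tperm X v != v -> v \in X.
Proof. by apply: contraR => /set_tperm_out->. Qed.

Lemma mem_set_tperm X v : (set_tperm X v \in X) = (v \in X).
Proof.
rewrite /set_tperm; case: pickP => [[x y] /andP[_ /eqP->]|_]; last by rewrite perm1.
by rewrite !inE; case: tpermP => [->|->|]; rewrite ?eqxx ?orbT.
Qed.

Lemma card2_set2 X x y : #|X| = 2 -> x \in X -> y \in X -> x != y -> X = [set x; y].
Proof.
move=> cardX xX yX xy; apply/esym/eqP; rewrite eqEcard cardX cards2 xy andbT.
by apply/subsetP=> v /set2P[]->.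
Qed.

Lemma mem_set_tperm_imset X Y v : (v \in set_tperm X @: Y) = (set_tperm X v \in Y).
Proof. by rewrite -{1}[v](set_tpermK X) mem_imset //; apply: perm_inj. Qed.

Lemma set_tpermJ (s : {perm V}) X : #|X| = 2 -> set_tperm (s @: X) = (set_tperm X ^ s)%g.
Proof.
move=> /card2_tperm[x [y [xy -> ->]]].
by rewrite imsetU !imset_set1 tpermJ set_tpermE // (inj_eq perm_inj).
Qed.

Lemma set_tperm_imset_disjoint (X Y : {set V}) :
  [disjoint X & Y] -> set_tperm X @: Y = Y.
Proof.
move=> disjXY; apply/setP=> v; rewrite mem_set_tperm_imset.
case: (boolP (v \in X)) => [vX|/set_tperm_out-> //].
by rewrite (disjointFr disjXY vX) (disjointFr disjXY) ?mem_set_tperm.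
Qed.

Lemma symdiff_set_tperm (X Y : {set V}) :
  #|X| = 2 -> #|Y| = 2 -> X != Y -> ~~ [disjoint X & Y] -> symdiff X Y = set_tperm X @: Y.
Proof.
move=> /card2_tperm[a [b [ab -> tX]]] cardY XY; rewrite -setI_eq0 => /set0Pn[z zXY].
have aY_bY : (a \in Y) = ~~ (b \in Y).
  move: zXY; rewrite in_setI => /andP[/set2P[]-> zY]; rewrite zY.
    by apply/esym/negP=> bY; case/eqP: XY; rewrite (card2_set2 cardY zY bY).
  by apply/negP=> aY; case/eqP: XY; rewrite (card2_set2 cardY aY zY).
apply/setP=> v; rewrite mem_set_tperm_imset tX /symdiff !inE.
case: tpermP => [->|->|/eqP/negPf va /eqP/negPf vb]; rewrite ?eqxx ?va ?vb ?orbT //=.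
  by rewrite aY_bY negbK andbT.
by rewrite aY_bY andbT.
Qed.

End SetTransposition.

(** * Labelled trees *)

Section LabelledGraphs.
Variables (N : nat) (V : finType).
Implicit Types (E F : 'I_N -> {set V}) (P Q : pred 'I_N) (x y z : V).

Definition edge_rel P E : rel V := fun x y => [exists j, [&& P j, x \in E j & y \in E j]].

Definition linked P E : rel V := connect (edge_rel P E).

Lemma linked_sym P E : symmetric (linked P E).
Proof.
apply: sym_connect_sym => x y.
by apply/existsP/existsP=> -[j /and3P[Pj xj yj]]; exists j; rewrite Pj xj yj.
Qed.

Lemma linked_trans P E y x z : linked P E x y -> linked P E y z -> linked P E x z.
Proof. exact: connect_trans. Qed.

Lemma linked_edge P E j x y : P j -> x \in E j -> y \in E j -> linked P E x y.
Proof. by move=> Pj xj yj; apply/connect1/existsP; exists j; rewrite Pj xj yj. Qed.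

Lemma linked_sub P Q E F :
  (forall j x y, P j -> x \in E j -> y \in E j -> linked Q F x y) ->
  forall x y, linked P E x y -> linked Q F x y.
Proof.
move=> hPQ x y; apply: connect_sub => {}x {}y /existsP[j /and3P[Pj xj yj]].
exact: hPQ Pj xj yj.
Qed.

Lemma linked_cut P E k x y : P k -> linked P E x y ->
  linked (predD1 P k) E x y \/ exists2 z, z \in E k & linked (predD1 P k) E x z.
Proof.
move=> Pk /connectP[p]; elim: p x => [|z p IHp] x /=; first by move=> _ ->; left; apply: connect0.
case/andP=> /existsP[j /and3P[Pj xj zj]] pz py.
case: (eqVneq j k) => [jk | nkj]; first by right; exists x; [rewrite -jk | exact: connect0].
have xz : linked (predD1 P k) E x z by apply: (linked_edge (j := j)); rewrite /= ?nkj.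
case: (IHp z pz py) => [zy | [t tk zt]]; first by left; apply: linked_trans zy.
by right; exists t => //; apply: linked_trans zt.
Qed.

Lemma linked_meet P E p q x y : P p -> P q -> E p :&: E q != set0 ->
  x \in E p :|: E q -> y \in E p :|: E q -> linked P E x y.
Proof.
move=> Pp Pq /set0Pn[z]; rewrite inE => /andP[zp zq] xpq ypq.
have hz t : t \in E p :|: E q -> linked P E t z.
  by case/setUP=> [tp|tq]; [apply: (linked_edge (j := p)) | apply: (linked_edge (j := q))].
by apply: linked_trans (hz _ xpq) _; rewrite linked_sym; apply: hz.
Qed.

(* [E k] is the edge labelled [k]; acyclicity is phrased as: every edge is a bridge. *)
Record labelled_tree E : Prop := LabelledTree {
  tree_card2 : forall k, #|E k| = 2;
  tree_connected : forall x y, linked predT E x y;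
  tree_bridge : forall k x y, x \in E k -> y \in E k -> linked (predC1 k) E x y -> x = y
}.

Lemma labelled_tree_eq E F : E =1 F -> labelled_tree E -> labelled_tree F.
Proof.
move=> EF [card2E connE bridgeE]; have linkedEF P : linked P E =2 linked P F.
  by apply: eq_connect => x y; apply: eq_existsb => j; rewrite !EF.
split=> [k|x y|k x y]; rewrite -?EF -?linkedEF //; exact: bridgeE.
Qed.

Lemma labelled_tree_relabel E (p : 'I_N -> 'I_N) :
  injective p -> labelled_tree E -> labelled_tree (E \o p).
Proof.
move=> p_inj [card2E connE bridgeE]; have [q pK qK] := injF_bij p_inj.
split=> [k|x y|k x y] //=.
  apply: linked_sub (connE x y) => j a b _ aj bj.
  by apply: (linked_edge (j := q j)); rewrite //= qK.
move=> xk yk xy; apply: (bridgeE _ _ _ xk yk); apply: linked_sub xy => j a b jk aj bj.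
by apply: (linked_edge (j := p j)); rewrite //= (inj_eq p_inj).
Qed.

Lemma labelled_tree_neq E p q : labelled_tree E -> p != q -> E p != E q.
Proof.
move=> [card2E _ bridgeE] pq; apply/eqP=> Epq.
have [x [y [xy Ep _]]] := card2_tperm (card2E p).
have xp : x \in E p by rewrite Ep !inE eqxx.
have yp : y \in E p by rewrite Ep !inE eqxx orbT.
move/eqP: xy; apply; apply: (bridgeE _ _ _ xp yp).
by apply: (linked_edge (j := q)); rewrite -?Epq //= eq_sym.
Qed.

End LabelledGraphs.

(* The edges labelled [p] and [q] are two sides of a triangle, and [E'] replaces them by any
   two distinct sides of it. *)
Section Triangle.
Variables (N : nat) (V : finType) (E E' : 'I_N -> {set V}) (p q : 'I_N).
Hypotheses (treeE : labelled_tree E) (pq : p != q)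
  (E'E : forall j, j != p -> j != q -> E' j = E j) (meetE : E p :&: E q != set0)
  (unionE' : E' p :|: E' q = E p :|: E q) (E'pq : E' p != E' q)
  (card2E'p : #|E' p| = 2) (card2E'q : #|E' q| = 2).

Let other := predD1 (predC1 p) q.

Let linked_other : linked other E' =2 linked other E.
Proof.
apply: eq_connect => x y; apply: eq_existsb => j.
by case: (boolP (other j)) => //= /andP[jq jp]; rewrite E'E.
Qed.

Let separated x y : x \in E p :|: E q -> y \in E p :|: E q -> linked other E x y -> x = y.
Proof.
have /set0Pn[z] := meetE; rewrite inE => /andP[zp zq].
have bridge r a b : r \in [:: p; q] -> a \in E r -> b \in E r -> linked other E a b -> a = b.
  move=> rpq ar br ab; apply: (tree_bridge treeE ar br); apply: linked_sub ab => j c d.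
  move=> /andP[jq jp] cj dj; apply: (linked_edge (j := j)) => //=.
  by move: rpq; rewrite !inE => /orP[]/eqP->.
have mixed a b : a \in E p -> b \in E q -> linked other E a b -> a = b.
  move=> ap bq ab; have az : a = z.
    apply: (tree_bridge treeE ap zp); apply: linked_trans (linked_edge (j := q) _ bq zq).
      by apply: linked_sub ab => j c d /andP[_ jp] cj dj; apply: (linked_edge (j := j)).
    by rewrite /= eq_sym.
  by apply: (bridge q) => //; rewrite ?inE ?eqxx ?orbT ?az.
case/setUP=> [xp|xq] /setUP[yp|yq] xy.
- by apply: (bridge p) xp yp xy; rewrite inE eqxx.
- exact: mixed.
- by apply/esym/mixed; rewrite // linked_sym.
- by apply: (bridge q) xq yq xy; rewrite !inE eqxx orbT.
Qed.

Lemma triangle_bridge x y : x \in E' p -> y \in E' p -> linked (predC1 p) E' x y -> x = y.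
Proof.
have inT t : t \in E' p :|: E' q -> t \in E p :|: E q by rewrite unionE'.
have meet_q a b : a \in E' p -> b \in E' p -> linked (predC1 p) E' a b -> a = b \/ a \in E' q.
  move=> ap bp ab; have qp : predC1 p q by rewrite /= eq_sym.
  case: (linked_cut qp ab) => [ab' | [c cq ac]].
    by left; apply: separated; rewrite ?inT ?inE ?ap ?bp -?linked_other.
  by right; rewrite (@separated a c) ?inT ?inE ?ap ?cq ?orbT // -linked_other.
move=> xp yp xy; case: (meet_q x y xp yp xy) => [// | xq].
case: (meet_q y x yp xp); [by rewrite linked_sym | by [] | move=> yq].
case: (eqVneq x y) => // nxy; case/eqP: E'pq.
by rewrite (card2_set2 card2E'p xp yp nxy) (card2_set2 card2E'q xq yq nxy).
Qed.

Let meetE' : E' p :&: E' q != set0.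
Proof.
suff: #|E' p :&: E' q| = #|E p :&: E q| by move: meetE; rewrite -!card_gt0 => ? ->.
apply: (@addnI #|E p :|: E q|); rewrite -{1}unionE' !cardsUI card2E'p card2E'q.
by rewrite !(tree_card2 treeE).
Qed.

Lemma triangle_connected x y : linked predT E' x y.
Proof.
apply: linked_sub (tree_connected treeE x y) => j a b _.
case: (eqVneq j p) => [->|jp]; last case: (eqVneq j q) => [->|jq].
- by move=> ap bp; apply: (linked_meet _ _ meetE'); rewrite ?unionE' inE ?ap ?bp.
- by move=> aq bq; apply: (linked_meet _ _ meetE'); rewrite ?unionE' inE ?aq ?bq ?orbT.
- by rewrite -E'E // => aj bj; apply: (linked_edge (j := j)).
Qed.

Lemma triangle_bridge_other k x y : k != p -> k != q -> x \in E' k -> y \in E' k ->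
  linked (predC1 k) E' x y -> x = y.
Proof.
move=> kp kq; rewrite E'E // => xk yk xy; apply: (tree_bridge treeE xk yk).
apply: linked_sub xy => j a b jk.
case: (eqVneq j p) => [->|jp]; last case: (eqVneq j q) => [->|jq].
- move=> ap bp; apply: (linked_meet _ _ meetE);
    by rewrite /= -?unionE' ?inE ?ap ?bp // eq_sym.
- move=> aq bq; apply: (linked_meet _ _ meetE);
    by rewrite /= -?unionE' ?inE ?aq ?bq ?orbT // eq_sym.
- by rewrite E'E // => aj bj; apply: (linked_edge (j := j)).
Qed.

End Triangle.

Lemma labelled_tree_triangle N (V : finType) (E E' : 'I_N -> {set V}) (p q : 'I_N) :
  labelled_tree E -> p != q -> (forall j, j != p -> j != q -> E' j = E j) ->
  E p :&: E q != set0 -> E' p :|: E' q = E p :|: E q -> E' p != E' q ->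
  #|E' p| = 2 -> #|E' q| = 2 -> labelled_tree E'.
Proof.
move=> treeE pq E'E meetE unionE' E'pq card'p card'q.
split=> [k|x y|k x y].
- case: (eqVneq k p) => [->|kp] //; case: (eqVneq k q) => [->|kq] //.
  by rewrite E'E // (tree_card2 treeE).
- exact: (triangle_connected treeE E'E meetE unionE').
case: (eqVneq k p) => [->|kp]; first exact: (triangle_bridge treeE pq E'E meetE unionE').
case: (eqVneq k q) => [->|kq]; last exact: (triangle_bridge_other treeE E'E meetE unionE').
have E'E_qp j : j != q -> j != p -> E' j = E j by move=> jq jp; apply: E'E.
have unionE'_qp : E' q :|: E' p = E q :|: E p by rewrite setUC unionE' setUC.
rewrite eq_sym in pq; rewrite eq_sym in E'pq; rewrite setIC in meetE.
exact: (triangle_bridge treeE pq E'E_qp meetE unionE'_qp E'pq card'q card'p).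
Qed.

Section Slide.
Variables (N : nat) (V : finType).
Implicit Types (E : 'I_N -> {set V}) (p q : 'I_N).

(* [slide (k-1) k] is the action of u_k and [slide k (k-1)] that of its inverse: adjacent
   edges E p = AB, E q = AC become E p = BC, E q = AB, disjoint edges swap their labels. *)
Definition slide p q E j :=
  if j == p then set_tperm (E p) @: E q else if j == q then E p else E j.

Lemma labelled_tree_slide E p q : p != q -> labelled_tree E -> labelled_tree (slide p q E).
Proof.
move=> pq treeE.
case: (boolP [disjoint E p & E q]) => [disjE | meetE].
  apply: (labelled_tree_eq _ (labelled_tree_relabel (@perm_inj _ (tperm p q)) treeE)) => j.
  rewrite /slide /=; case: tpermP => [->|->|/eqP/negPf-> /eqP/negPf->]; rewrite ?eqxx //.
    by rewrite set_tperm_imset_disjoint.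
  by rewrite eq_sym (negPf pq).
apply: (labelled_tree_triangle treeE pq) => [j jp jq|||||].
- by rewrite /slide (negPf jp) (negPf jq).
- by rewrite setI_eq0.
- apply/setP=> v; rewrite /slide !eqxx [q == p]eq_sym (negPf pq) !inE mem_set_tperm_imset.
  by case: (boolP (v \in E p)) => [vp|/negPf vp]; rewrite ?vp ?orbT // set_tperm_out ?vp // orbC.
- rewrite /slide !eqxx [q == p]eq_sym (negPf pq); apply: contraNneq (labelled_tree_neq treeE pq).
  move=> Eqp; apply/eqP/setP=> v.
  have := mem_set_tperm_imset (E p) (E q) (set_tperm (E p) v).
  by rewrite Eqp set_tpermK mem_set_tperm.
- by rewrite /slide eqxx card_imset ?(tree_card2 treeE) //; apply: perm_inj.
- by rewrite /slide [q == p]eq_sym (negPf pq) eqxx (tree_card2 treeE).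
Qed.

End Slide.

(** * The coverings of labelled trees *)

Lemma ord2_cases (i : 'I_2) : i = ord0 \/ i = ord_max.
Proof. by case: i => [[|[|//]] ?]; [left | right]; apply: val_inj. Qed.

Definition tree_cov N (V : finType) (E : 'I_N -> {set V}) : 'I_N -> {perm V} :=
  fun k => set_tperm (E k).

Section TreeCoverings.
Variables (N : nat) (V : finType) (E : 'I_N -> {set V}).
Hypothesis treeE : labelled_tree E.

Lemma gamma_tree_cov k : gamma (tree_cov E) k = E k.
Proof.
have [a [b [ab Ek tk]]] := card2_tperm (tree_card2 treeE k).
by rewrite (gamma_tperm ab tk) Ek.
Qed.

Lemma tree_cov_connected B : connected_cov (tree_cov E) B.
Proof.
move=> v; have /connectP[p] := tree_connected treeE B v.
elim: p B => [|c p IHp] x /=; first by move=> _ ->; exists [::].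
case/andP=> /existsP[j /and3P[_ xj cj]] /IHp {}IHp /IHp[w <-].
case: (eqVneq x c) => [-> | xc]; first by exists w.
exists ((j, false) :: w); rewrite /read /= /step_letter /= /tree_cov.
by rewrite (set_tperm_pair (tree_card2 treeE j) xj cj xc).
Qed.

Lemma closed_walk_label_repeats m (f : nat -> V) (l : nat -> 'I_N) : 0 < m ->
  f m = f 0 -> f 0 != f 1 -> (forall i, i < m -> f i \in E (l i) /\ f i.+1 \in E (l i)) ->
  exists2 i, 0 < i < m & l i = l 0.
Proof.
move=> m_gt0 fm f01 edge.
have walk n : n < m ->
    linked (predC1 (l 0)) E (f 1) (f n.+1) \/ exists2 i, 0 < i <= n & l i = l 0.
  elim: n => [|n IHn] n_lt; first by left; apply: connect0.
  case: (eqVneq (l n.+1) (l 0)) => [ln | ln]; first by right; exists n.+1; rewrite ?leqnn.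
  case: (IHn (ltnW n_lt)) => [lnk | [i /andP[i0 ilt] li]]; last first.
    by right; exists i; rewrite ?i0 ?(leqW ilt).
  left; apply: linked_trans lnk _; have [e1 e2] := edge n.+1 n_lt.
  exact: (linked_edge (j := l n.+1)).
have [e0 e1] := edge 0 m_gt0.
case: (walk m.-1 _) => [|lnk | [i /andP[i0 ilt] li]]; rewrite ?prednK //.
  move: lnk; rewrite prednK // fm => /(tree_bridge treeE e1 e0) f10.
  by rewrite f10 eqxx in f01.
by exists i; rewrite ?i0 //= -(prednK m_gt0) ltnS.
Qed.

Lemma tree_cov_circuit m (vs : 'I_m -> V) ks : circuit (tree_cov E) vs ks -> 1 < m ->
  m = 2 /\ forall i j, ks i = ks j.
Proof.
move=> [m_gt0 [vs_inj vsS]] m_gt1.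
pose o i : 'I_m := Ordinal (ltn_pmod i m_gt0).
pose f i := vs (o i); pose l i := ks (o i).
have fS i : set_tperm (E (l i)) (f i) = f i.+1.
  have /= -> := vsS (o i); congr vs; apply: val_inj.
  by rewrite /= -addn1 modnDml addn1.
have f_inj i j : f i = f j -> i = j %[mod m] by move/vs_inj/(congr1 val).
have f_neq i : f i != f i.+1.
  apply/eqP=> /f_inj/esym/eqP; rewrite eqn_mod_dvd // subSnn dvdn1 => /eqP m1.
  by rewrite m1 in m_gt1.
have edge i : f i \in E (l i) /\ f i.+1 \in E (l i).
  have moved : set_tperm (E (l i)) (f i) != f i by rewrite fS eq_sym.
  by rewrite -(fS i) mem_set_tperm; split; apply: set_tperm_moved moved.
have f0m : f m = f 0 by congr vs; apply: val_inj; rewrite /= modnn mod0n.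
have [i /andP[i0 ilt] li] := closed_walk_label_repeats m_gt0 f0m (f_neq 0) (fun i _ => edge i).
have El0 : E (l 0) = [set f 0; f 1].
  by have [e0 e1] := edge 0; apply: card2_set2; rewrite ?(tree_card2 treeE) ?f_neq.
have i1 : i = 1.
  have [fi _] := edge i; rewrite li El0 in fi.
  case/set2P: fi => /f_inj; rewrite ?mod0n !modn_small // => i_0.
  by rewrite i_0 in i0.
subst i; have [_ f2] := edge 1; rewrite li El0 in f2.
have m2 : m = 2.
  case/set2P: f2 => [/f_inj | f21]; last by move: (f_neq 1); rewrite f21 eqxx.
  rewrite mod0n; case: (ltngtP m 2) => [|m_gt2|//]; first by rewrite ltnNge m_gt1.
  by rewrite modn_small.
have ks_l (i : 'I_m) : ks i = l i by congr ks; apply: val_inj; rewrite /= modn_small.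
have l_l0 n : n < 2 -> l n = l 0 by case: n => [|[|]].
by split=> // a b; rewrite !ks_l !l_l0 -?m2.
Qed.

Lemma tree_cov_tree_like : tree_like (tree_cov E).
Proof.
split; [|split].
- move=> m vs ks c; rewrite leqNgt; apply/negP=> m_gt2.
  by have [m2 _] := tree_cov_circuit c (ltnW m_gt2); rewrite m2 in m_gt2.
- by move=> vs ks c; have [_] := tree_cov_circuit c (isT : 1 < 2); apply.
move=> k; have [a [b [ab Ek tk]]] := card2_tperm (tree_card2 treeE k).
exists (fun i : 'I_2 => if i == ord0 then a else b), (fun=> k).
split; [split=> //; split | split=> //].
- move=> i j; case: (ord2_cases i) => ->; case: (ord2_cases j) => ->;
    by rewrite //= => ab'; rewrite ab' eqxx in ab.
- by move=> i; case: (ord2_cases i) => ->; rewrite /tree_cov tk /= ?tpermL ?tpermR.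
move=> vs ks [_ [vs_inj vsS]] ksk.
have v01 : vs ord0 != vs ord_max by apply/eqP=> /vs_inj.
have s0 : set_tperm (E k) (vs ord0) = vs ord_max.
  by rewrite -(ksk ord0) [LHS]vsS; congr vs; apply: val_inj.
have v0 : vs ord0 \in E k by apply: set_tperm_moved; rewrite s0 eq_sym.
have := mem_set_tperm (E k) (vs ord0); rewrite s0 v0 Ek.
move: v0 v01; rewrite Ek => /set2P[]-> /[swap] /set2P[]->; rewrite ?eqxx //; by [left | right].
Qed.

End TreeCoverings.

Section TreeLikeCoverings.
Variables (N : nat) (V : finType) (sigma : 'I_N -> {perm V}).

Lemma seq_circuit (c : seq V) x0 (ks : nat -> 'I_N) : uniq c -> 0 < size c ->
  (forall i, i < size c -> sigma (ks i) (nth x0 c i) = nth x0 c (i.+1 %% size c)) ->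
  circuit sigma (fun i : 'I_(size c) => nth x0 c i) (fun i => ks i).
Proof.
move=> c_uniq c_gt0 cS; split=> //; split=> [i j /eqP|i]; last exact: cS.
by rewrite nth_uniq // => /eqP/val_inj.
Qed.

Lemma orbit_circuit k v :
  circuit sigma (fun i : 'I_(size (fingraph.orbit (sigma k) v)) =>
    nth v (fingraph.orbit (sigma k) v) i) (fun=> k).
Proof.
have k_inj : injective (sigma k) := @perm_inj _ (sigma k).
apply: seq_circuit; rewrite ?fingraph.orbit_uniq ?fingraph.size_orbit ?fingraph.order_gt0 //.
move=> i i_lt; rewrite nth_traject //; case: (ltngtP i.+1 (fingraph.order (sigma k) v)).
- by move=> lt; rewrite modn_small // nth_traject.
- by rewrite ltnNge i_lt.
move=> eq; rewrite eq modnn nth_traject ?fingraph.order_gt0 // -iterS eq.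
exact: fingraph.iter_order.
Qed.

Hypothesis tl : tree_like sigma.

Lemma tree_like_tperm k : exists a b, a != b /\ sigma k = tperm a b.
Proof.
case: tl => short [_ /(_ k)[vs [ks [[_ [vs_inj vsS]] [ksk unique2]]]]].
have k_inj : injective (sigma k) := @perm_inj _ (sigma k).
have ab : vs ord0 != vs ord_max by apply/eqP=> /vs_inj.
have sa : sigma k (vs ord0) = vs ord_max.
  by rewrite -(ksk ord0) vsS; congr vs; apply: val_inj.
have sb : sigma k (vs ord_max) = vs ord0.
  by rewrite -(ksk ord_max) vsS; congr vs; apply: val_inj.
exists (vs ord0), (vs ord_max); split=> //; apply/permP=> v.
case: (tpermP (vs ord0) (vs ord_max) v) => [-> | -> | va vb] //.
case: (eqVneq (sigma k v) v) => // fv; exfalso.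
case: (eqVneq (sigma k (sigma k v)) v) => [ffv | ffv].
  pose vs' (i : 'I_2) := if i == ord0 then v else sigma k v.
  have c2 : circuit sigma vs' (fun=> k).
    split=> //; split=> [i j | i]; last by case: (ord2_cases i) => ->.
    case: (ord2_cases i) => ->; case: (ord2_cases j) => -> //= /eqP;
      by rewrite ?(negPf fv) // eq_sym (negPf fv).
  by case: (unique2 vs' _ c2 (fun=> erefl)) => -[/= v_eq _].
have := short _ _ _ (orbit_circuit k v); rewrite fingraph.size_orbit.
have := fingraph.iter_order k_inj v; have := fingraph.order_gt0 (sigma k) v.
by case: (fingraph.order _ _) => [|[|[|]]] //= _ /eqP; rewrite ?(negPf fv) ?(negPf ffv).
Qed.

Lemma tree_like_gamma_card2 k : #|gamma sigma k| = 2.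
Proof.
by have [a [b [ab sk]]] := tree_like_tperm k; rewrite (gamma_tperm ab sk) cards2 ab.
Qed.

Lemma tree_like_cov k : tree_cov (gamma sigma) k = sigma k.
Proof.
by have [a [b [ab sk]]] := tree_like_tperm k; rewrite /tree_cov (gamma_tperm ab sk) set_tpermE.
Qed.

Lemma tree_like_bridge k x y : x \in gamma sigma k -> y \in gamma sigma k ->
  linked (predC1 k) (gamma sigma) x y -> x = y.
Proof.
case: tl => short [same_label _] xk yk /connectP[p pth ylast]; rewrite {y}ylast in yk *.
apply/eqP/negPn/negP=> xy.
case: (shortenP pth) xy yk => {pth}p pth p_uniq _ xy yk.
pose c := x :: p; pose G := gamma sigma.
have cS i : i < size p -> exists2 j, j != k & (nth x c i \in G j) && (nth x c i.+1 \in G j).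
  by move/(pathP x pth)=> /existsP[j /and3P[/= jk ci ci1]]; exists j; rewrite ?ci.
pose ks i := if i < size p
  then odflt k [pick j | [&& j != k, nth x c i \in G j & nth x c i.+1 \in G j]] else k.
have ksS i : i < size p -> [&& ks i != k, nth x c i \in G (ks i) & nth x c i.+1 \in G (ks i)].
  move=> ip; rewrite /ks ip; case: pickP => [j -> // | none].
  by case: (cS i ip) => j jk /andP[ci ci1]; move: (none j); rewrite jk ci ci1.
have sigmaG j u w : u \in G j -> w \in G j -> u != w -> sigma j u = w.
  by rewrite -tree_like_cov; apply: set_tperm_pair; apply: tree_like_gamma_card2.
have cc : circuit sigma (fun i : 'I_(size c) => nth x c i) (fun i => ks i).
  apply: seq_circuit => // i i_lt; case: (ltngtP i.+1 (size c)) => [lt | | eq].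
  - have /and3P[_ ci ci1] := ksS i lt; rewrite modn_small //; apply: sigmaG ci ci1 _.
    by rewrite nth_uniq // ?(ltnW lt) // neq_ltn ltnSn.
  - by rewrite ltnNge i_lt.
  - move: eq i_lt; rewrite /= => -[->] _; rewrite modnn /ks ltnn /= (last_nth x) in xy yk *.
    by apply: sigmaG; rewrite // eq_sym.
have p_gt0 : 0 < size p by rewrite lt0n; apply: contraNneq xy => /size0nil ->.
have p1 : size p = 1 by apply/anti_leq; rewrite p_gt0 -ltnS (short _ _ _ cc).
have /and3P[] := ksS 0 p_gt0; move: cc; rewrite /c /= p1 => /same_label->.
by rewrite /ks p1 ltnn eqxx.
Qed.

Lemma linked_read w v : linked predT (gamma sigma) v (read sigma v w).
Proof.
elim: w v => [|[j c] w IHw] v; first exact: connect0.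
apply: linked_trans (IHw _); have [a [b [ab sj]]] := tree_like_tperm j.
have Gj : gamma sigma j = [set a; b] := gamma_tperm ab sj.
rewrite /step_letter /= sj; case: c; rewrite ?tpermV.
all: case: tpermP => [-> | -> | _ _]; try exact: connect0.
all: by apply: (linked_edge (j := j)); rewrite // Gj !inE eqxx ?orbT.
Qed.

Lemma tree_like_labelled_tree B : connected_cov sigma B -> labelled_tree (gamma sigma).
Proof.
move=> conn; split=> [k | x y | k x y]; [exact: tree_like_gamma_card2 | | exact: tree_like_bridge].
have [wx <-] := conn x; have [wy <-] := conn y.
by apply: linked_trans (linked_read wy B); rewrite linked_sym; apply: linked_read.
Qed.

End TreeLikeCoverings.

(** * The action of the generators of BC_N *)

Lemma ord_pred_neq N (k : 'I_N) : 1 < N -> ord_pred k != k.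
Proof.
move=> N_gt1; apply/eqP=> pk; have := ord_predK k; rewrite pk => /(congr1 val) /=.
case: (ltngtP k.+1 N) => [lt | gt | eq]; first by rewrite modn_small // => /esym/n_Sn.
  by rewrite ltnNge ltn_ord in gt.
by rewrite eq modnn => k0; move: N_gt1; rewrite -eq -k0.
Qed.

Section Generators.
Variables (N : nat) (V : finType).
Hypothesis N_gt1 : 1 < N.
Implicit Types (E : 'I_N -> {set V}) (k : 'I_N).

Lemma gen_tree_act_BU E k : labelled_tree E ->
  gen_tree_act (BU k) E =1 slide (ord_pred k) k E.
Proof.
move=> treeE j; have pk := ord_pred_neq k N_gt1; rewrite /slide /=.
case: ifP => [disjE | /negbT meetE]; first by rewrite set_tperm_imset_disjoint.
by rewrite symdiff_set_tperm ?(tree_card2 treeE) ?labelled_tree_neq.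
Qed.

Lemma gen_tree_act_BUInv E k : labelled_tree E ->
  gen_tree_act (BUInv k) E =1 slide k (ord_pred k) E.
Proof.
move=> treeE j; have kp : k != ord_pred k by rewrite eq_sym ord_pred_neq.
rewrite /slide /=; case: (eqVneq j k) => [->|jk]; rewrite ?(negPf kp) ?eqxx; last by case: ifP.
case: ifP => [disjE | /negbT meetE]; first by rewrite set_tperm_imset_disjoint // disjoint_sym.
rewrite /symdiff setUC setIC -/(symdiff _ _) symdiff_set_tperm ?(tree_card2 treeE) //.
  by rewrite labelled_tree_neq // eq_sym.
by rewrite disjoint_sym.
Qed.

Lemma labelled_tree_gen_tree_act g E : labelled_tree E -> labelled_tree (gen_tree_act g E).
Proof.
move=> treeE; have pk k : ord_pred k != k := ord_pred_neq k N_gt1.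
case: g => [||k|k].
- exact/labelled_tree_relabel/treeE/can_inj/ord_predK.
- exact/labelled_tree_relabel/treeE/can_inj/ordSK.
- apply: labelled_tree_eq (labelled_tree_slide (pk k) treeE) => j.
  by rewrite gen_tree_act_BU.
- apply: labelled_tree_eq (labelled_tree_slide _ treeE) => [j|]; last by rewrite eq_sym.
  by rewrite gen_tree_act_BUInv.
Qed.

Definition ginv (g : bcgen N) : bcgen N :=
  match g with BLam => BLamInv | BLamInv => BLam | BU k => BUInv k | BUInv k => BU k end.

Lemma ginvK : involutive ginv. Proof. by case. Qed.

Lemma tree_cov_gen_tree_act g E : labelled_tree E ->
  forall i v, tree_cov (gen_tree_act g E) i v = read (tree_cov E) v (gen_img (ginv g) i).
Proof.
move=> treeE i v; case: g => [||k|k] //.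
- have pk := ord_pred_neq k N_gt1.
  rewrite /tree_cov gen_tree_act_BU // /slide /=.
  case: (eqVneq i (ord_pred k)) => [-> | _]; last by case: (eqVneq i k).
  by rewrite (negPf pk) read_conjgV /= set_tpermJ ?set_tpermV ?(tree_card2 treeE).
- have kp : k != ord_pred k by rewrite eq_sym ord_pred_neq.
  rewrite /tree_cov gen_tree_act_BUInv // /slide /=.
  case: (eqVneq i k) => [-> | _]; last by case: (eqVneq i (ord_pred k)).
  by rewrite (negPf kp) read_conjg /= set_tpermJ ?(tree_card2 treeE).
Qed.

Lemma gen_img_ginv g i : free_eq (subst (gen_img g) (gen_img (ginv g) i)) (gl i).
Proof.
have kp (k : 'I_N) : ord_pred k != k := ord_pred_neq k N_gt1.
have pk (k : 'I_N) : k != ord_pred k by rewrite eq_sym kp.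
case: g => [||k|k] /=.
- by rewrite /subst /= ord_predK; apply: free_eq_refl.
- by rewrite /subst /= ordSK; apply: free_eq_refl.
- case: (eqVneq i k) => [-> | ik]; first by rewrite /subst /= !eqxx; apply: free_eq_refl.
  case: (eqVneq i (ord_pred k)) => [-> | ipk]; last first.
    by rewrite /subst /= (negPf ik) (negPf ipk); apply: free_eq_refl.
  rewrite /subst /= (negPf (kp k)) !eqxx (negPf (pk k)) /=.
  apply: free_eq_trans (free_eq_cancel [::] _ (k, false)) _.
  exact: (free_eq_cancel [:: (ord_pred k, false)] [::] (k, false)).
- case: (eqVneq i (ord_pred k)) => [-> | ipk].
    by rewrite /subst /= !eqxx; apply: free_eq_refl.
  case: (eqVneq i k) => [-> | ik]; last first.
    by rewrite /subst /= (negPf ik) (negPf ipk); apply: free_eq_refl.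
  rewrite /subst /= (negPf (pk k)) !eqxx (negPf (kp k)) /=.
  apply: free_eq_trans (free_eq_cancel [::] _ (ord_pred k, true)) _.
  exact: (free_eq_cancel [:: (k, false)] [::] (ord_pred k, true)).
Qed.

End Generators.

Lemma tree_cov_tree_act N (V : finType) (sigma : 'I_N -> {perm V}) (B : V) s :
  1 < N -> tree_like sigma -> connected_cov sigma B ->
  labelled_tree (tree_act s (gamma sigma)) /\
  forall w, in_g (tree_cov (tree_act s (gamma sigma))) B w <->
    exists h, in_g sigma B h /\ free_eq (bc_apply s h) w.
Proof.
move=> N_gt1 tl conn; elim: s => [|g s [treeE IHs]] /=.
  split=> [|w]; first exact: tree_like_labelled_tree conn.
  rewrite /in_g (eq_read (tree_like_cov tl)).
  split=> [gw | [h [gh /(read_free_eq sigma B) <-]]] //.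
  by exists w; split=> //; apply: free_eq_refl.
split=> [|w]; first exact: labelled_tree_gen_tree_act.
have ginv_img i : free_eq (subst (gen_img (ginv g)) (gen_img g i)) (gl i).
  by rewrite -{2}(ginvK g); apply: gen_img_ginv.
apply: iff_trans (in_g_pullback _ (gen_img_ginv N_gt1 g) ginv_img
  (tree_cov_gen_tree_act N_gt1 g treeE) w) _.
split=> [[h' [/IHs[h [gh hh']] h'w]] | [h [gh hw]]].
  by exists h; split=> //; apply: free_eq_trans (free_eq_subst _ hh') h'w.
by exists (bc_apply s h); split=> //; apply/IHs; exists h; split=> //; apply: free_eq_refl.
Qed.

Theorem theorem8 (N : nat) (hN : 2 <= N)
  (V : finType) (sigma : 'I_N -> {perm V}) (B : V)
  (hconn : connected_cov sigma B) (htl : tree_like sigma)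
  (s : seq (bcgen N)) (hs : bc_word_ok s)
  (V' : finType) (sigma' : 'I_N -> {perm V'}) (B' : V')
  (hconn' : connected_cov sigma' B')
  (hg : forall w : fword N,
        in_g sigma' B' w <-> exists h, in_g sigma B h /\ free_eq (bc_apply s h) w) :
  tree_like sigma' /\
  exists f : V -> V', bijective f /\ f B = B' /\
    forall k : 'I_N, gamma sigma' k = f @: tree_act s (gamma sigma) k.
Proof.
have [treeE gE] := tree_cov_tree_act s hN htl hconn.
set E := tree_act s (gamma sigma) in treeE gE *.
have same_g w : in_g (tree_cov E) B w <-> in_g sigma' B' w.
  exact: iff_trans (gE w) (iff_sym (hg w)).
have [f [f_bij fB fE]] := cov_iso (tree_cov_connected treeE B) hconn' same_g.
have [g fK gK] := f_bij.
split; first exact: tree_like_transport fK gK fE (tree_cov_tree_like treeE).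
exists f; split=> //; split=> // k.
by rewrite (gamma_transport fK gK fE) gamma_tree_cov.
Qed.
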